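(* Let $n$ be even. The expected runtime of the SD-(1+1) EA with parameter $R$, where $n+1\le R\le n^{O(1)}$, on $\mathrm{LeadingOnes}$ is $O(n^2)$.
   Context: $\mathrm{LeadingOnes}(x_1,\dots,x_n)=\sum_{i=1}^n\prod_{j=1}^i x_j$. The SD-(1+1) EA with parameter $R\ge1$ maximizing $f\colon\{0,1\}^n\to\mathbb{R}$ ($n$ even) works as follows: choose $x$ uniformly at random from $\{0,1\}^n$, set strength $r\gets 1$ and counter $u\gets0$. In each iteration: create $y$ from $x$ by flipping each bit independently with probability $r/n$; set $u\gets u+1$. If $f(y)>f(x)$, set $x\gets y$, $r\gets1$, $u\gets0$. Otherwise, if $f(y)=f(x)$ and $r=1$, set $x\gets y$; and (in the case $f(y)\le f(x)$) if $u>2(en/r)^r\ln(nR)$, set $r\gets\min\{r+1,n/2\}$ and $u\gets 0$. The runtime is the number of iterations until a global maximum is first created. *)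

From HB Require Import structures.
From mathcomp Require Import all_boot all_order all_algebra.
From mathcomp Require Import reals ereal sequences exp.
Set Implicit Arguments. Unset Strict Implicit. Unset Printing Implicit Defensive.
Import Order.TTheory GRing.Theory Num.Theory.
Local Open Scope ring_scope.

Section SDEA.
Variable R : realType.
Variable n : nat.

Definition bits := {ffun 'I_n -> bool}.

Definition LeadingOnes (x : bits) : nat :=
  \sum_(i < n) \prod_(j < n | (j <= i)%N) (x j : nat).

Definition ones : bits := [ffun => true].

(* probability that standard bit mutation with rate r/n turns x into y *)
Definition mutprob (r : nat) (x y : bits) : R :=
  \prod_(i < n) (if x i != y i then r%:R / n%:R else 1 - r%:R / n%:R).

(* state of the algorithm: current search point x, strength r, counter u *)
Definition state := (bits * nat * nat)%type.

Definition threshold (Rp : R) (r : nat) : R :=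
  2 * (expR 1 * n%:R / r%:R) ^+ r * ln (n%:R * Rp).

Definition sd_step (Rp : R) (s : state) (y : bits) : state :=
  let: (x, r, u) := s in
  let u' := u.+1 in
  if (LeadingOnes x < LeadingOnes y)%N then (y, 1%N, 0%N)
  else
    let x' := if (LeadingOnes y == LeadingOnes x) && (r == 1%N) then y else x in
    if threshold Rp r < u'%:R then (x', minn r.+1 n./2, 0%N)
    else (x', r, u').

(* survival: probability that, started in state s, none of the next t
   offspring is a global maximum *)
Fixpoint survive (Rp : R) (t : nat) (s : state) : R :=
  match t with
  | 0 => 1
  | t'.+1 =>
      \sum_(y : bits)
        mutprob s.1.2 s.1.1 y *
        (if y == ones then 0 else survive Rp t' (sd_step Rp s y))
  end.

(* P(T > t), where T is the runtime: the initial point is uniform, r = 1,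
   u = 0, and T > t iff no global maximum is among the initial point and
   the first t offspring. *)
Definition tail_prob (Rp : R) (t : nat) : R :=
  (2 ^+ n)^-1 * \sum_(x0 : bits)
     (if x0 == ones then 0 else survive Rp t (x0, 1%N, 0%N)).

(* expected runtime E[T] = sum_{t >= 0} P(T > t), in the extended reals *)
Definition expected_runtime (Rp : R) : \bar R :=
  (\sum_(0 <= t <oo) (tail_prob Rp t)%:E)%E.

End SDEA.

From HB Require Import structures.
From mathcomp Require Import all_boot all_order all_algebra.
From mathcomp Require Import reals ereal sequences exp.
From mathcomp Require Import topology normedtype.
From mathcomp Require Import zify ring lra.
Import Order.TTheory GRing.Theory Num.Theory.
Local Open Scope ring_scope.
Set Implicit Arguments. Unset Strict Implicit. Unset Printing Implicit Defensive.

(* Expected runtime of the SD-(1+1) EA on LeadingOnes: E[T] <= 33 n^2 for all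
   n >= 64 and all parameters R >= n + 1.

   The proof is an additive drift argument.  On fitness level i (i leading
   ones) an offspring is strictly better with probability
   p(i,r) = (r/n) (1 - r/n)^i, where r is the current strength.  We define
   explicit bounds [phase_time i r] on the expected time to leave level i
   when entering it with strength r and counter 0, [stage_time i r u] for an
   arbitrary counter u, and the [potential] of a state: [stage_time] of the
   current level plus the sum of [phase_time k 1] over the levels k above.
   The potential is nonnegative and decreases by at least one per iteration
   in expectation, hence bounds the sum of the survival probabilities
   [survive], i.e. the expected remaining runtime.  It remains to show
   [phase_time i 1 <= 33 n]: at strengths r <= n/4 a whole phase fails with
   probability at most 1/n^2 because the threshold 2 (en/r)^r ln(nR) is
   long enough, while at larger strengths the crude bound n 2^n per phase is
   absorbed by the factor (1/n^2)^(n/4 - 1). *)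

Section LeadingOnesFacts.
Local Close Scope ring_scope.
Variable n : nat.

Definition ones_upto (x : bits n) (k : nat) : bool :=
  [forall j : 'I_n, (j <= k) ==> x j].

Lemma ones_upto_mono (x : bits n) (i k : nat) :
  k <= i -> ones_upto x i -> ones_upto x k.
Proof.
move=> le_ki /forallP x_i; apply/forallP => j; apply/implyP => le_jk.
by have := x_i j; rewrite (leq_trans le_jk le_ki).
Qed.

Lemma prod_bits_ones_upto (x : bits n) (i : nat) :
  \prod_(j < n | j <= i) (x j : nat) = ones_upto x i.
Proof.
have [/forallP x_i | ] := boolP (ones_upto x i).
  by rewrite big1 // => j le_ji; have := x_i j; rewrite le_ji => /= ->.
rewrite negb_forall => /existsP [j]; rewrite negb_imply => /andP [le_ji xj0].
by rewrite (bigD1 j) //= (negbTE xj0).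
Qed.

Lemma LeadingOnesE (x : bits n) :
  LeadingOnes x = \sum_(0 <= i < n) ones_upto x i.
Proof.
by rewrite /LeadingOnes big_mkord; apply: eq_bigr => i _; exact: prod_bits_ones_upto.
Qed.

Lemma sum_bool_le (m k : nat) (b : nat -> bool) : \sum_(m <= i < k) b i <= k - m.
Proof.
rewrite -[k - m]muln1 -sum_nat_const_nat; apply: leq_sum => i _; exact: leq_b1.
Qed.

Lemma LeadingOnes_le (x : bits n) : LeadingOnes x <= n.
Proof. by rewrite LeadingOnesE (leq_trans (sum_bool_le _ _ _)) ?subn0. Qed.

Lemma LeadingOnes_gt (x : bits n) (k : nat) :
  (k < LeadingOnes x) = (k < n) && ones_upto x k.
Proof.
have [lt_kn /= | le_nk] := ltnP k n; last first.
  by apply/negbTE; rewrite -leqNgt (leq_trans (LeadingOnes_le x)).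
rewrite LeadingOnesE (big_cat_nat (n := k.+1)) //= big_nat_recr //=.
case x_k: (ones_upto x k).
  have -> : \sum_(0 <= i < k) ones_upto x i = k.
    transitivity (\sum_(0 <= i < k) 1); last by rewrite sum_nat_const_nat subn0 muln1.
    by apply: eq_big_nat => i /andP [_ lt_ik]; rewrite (ones_upto_mono (ltnW lt_ik) x_k).
  by rewrite /= -addnA addnS ltnS leq_addr.
have -> : \sum_(k.+1 <= i < n) ones_upto x i = 0.
  apply: big1_seq => i /andP [_]; rewrite mem_index_iota => /andP [lt_ki _].
  by case: (boolP (ones_upto x i)) => // /(ones_upto_mono (ltnW lt_ki)); rewrite x_k.
by rewrite !addn0 ltnNge (leq_trans (sum_bool_le _ _ _)) ?subn0.
Qed.

Lemma LeadingOnes_prefix (x : bits n) (j : 'I_n) : j < LeadingOnes x -> x j.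
Proof.
rewrite LeadingOnes_gt => /andP [_ /forallP x_j].
by have := x_j j; rewrite leqnn.
Qed.

Lemma LeadingOnes_first_zero (x : bits n) (j : 'I_n) :
  nat_of_ord j = LeadingOnes x -> x j = false.
Proof.
move=> jE; apply/negbTE/negP => xj.
have := LeadingOnes_gt x j; rewrite ltn_ord {1}jE ltnn => /esym/negbT/negP; apply.
apply/forallP => i; apply/implyP; rewrite leq_eqVlt => /orP [/eqP/val_inj -> //|].
by rewrite jE; exact: LeadingOnes_prefix.
Qed.

Lemma LeadingOnes_ones : LeadingOnes (ones n) = n.
Proof.
apply/eqP; rewrite eqn_leq LeadingOnes_le /=.
case: (posnP n) => [-> // | n_gt0].
rewrite -{1}(prednK n_gt0) LeadingOnes_gt prednK // leqnn /=.
by apply/forallP => j; rewrite ffunE implybT.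
Qed.

Lemma LeadingOnes_lt (x : bits n) : x != ones n -> LeadingOnes x < n.
Proof.
move=> x_not1; rewrite ltn_neqAle LeadingOnes_le andbT.
apply: contraNneq x_not1 => LOn; apply/eqP/ffunP => j; rewrite ffunE.
by apply: LeadingOnes_prefix; rewrite LOn.
Qed.

End LeadingOnesFacts.

Section Mutation.
Variable R : realType.
Variable n : nat.

Lemma rate_bounds (r : nat) : (r <= n)%N -> 0 <= (r%:R / n%:R : R) <= 1.
Proof.
move=> le_rn; rewrite divr_ge0 //=.
have [n0 | n_gt0] := posnP n; first by rewrite (_ : r = 0%N) ?mul0r //; lia.
by rewrite ler_pdivrMr ?ltr0n // mul1r ler_nat.
Qed.

Lemma mutprob_ge0 (r : nat) (x y : bits n) : (r <= n)%N -> 0 <= mutprob R r x y.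
Proof.
move=> /rate_bounds /andP [a_ge0 a_le1].
by apply: prodr_ge0 => i _; case: ifP; rewrite ?subr_ge0.
Qed.

Lemma sum_prod_bits (G : 'I_n -> bool -> R) :
  \sum_(y : bits n) \prod_(i < n) G i (y i) = \prod_(i < n) (G i true + G i false).
Proof.
rewrite -[LHS]/(\sum_(y : {ffun _ -> _}) _) -(@bigA_distr_bigA R 0 1 *%R +%R _ _ G) /=.
by apply: eq_bigr => i _; rewrite big_bool.
Qed.

Lemma mutprob_sum1 (r : nat) (x : bits n) : \sum_(y : bits n) mutprob R r x y = 1.
Proof.
rewrite /mutprob (sum_prod_bits (fun i b => if x i != b then _ else _)).
by apply: big1 => i _; case: (x i) => /=; rewrite ?subrK // addrC subrK.
Qed.

(* Probability of leaving fitness level [i] with strength [r]: flip bit [i],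
   keep the first [i] bits. *)
Definition improve_prob (i r : nat) : R := r%:R / n%:R * (1 - r%:R / n%:R) ^+ i.

Lemma improve_prob_gt0 (i r : nat) : (0 < r)%N -> (r < n)%N -> 0 < improve_prob i r.
Proof.
move=> r_gt0 lt_rn; have n_gt0 : (0 < n%:R :> R) by rewrite ltr0n; lia.
have a_lt1 : r%:R / n%:R < 1 :> R by rewrite ltr_pdivrMr // mul1r ltr_nat.
by rewrite mulr_gt0 ?divr_gt0 ?exprn_gt0 ?subr_gt0 // ltr0n.
Qed.

Lemma improve_prob_le1 (i r : nat) : (r <= n)%N -> improve_prob i r <= 1.
Proof.
move=> /rate_bounds /andP [a_ge0 a_le1].
by rewrite mulr_ile1 // ?exprn_ge0 ?exprn_ile1 ?subr_ge0 // lerBlDr lerDl.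
Qed.

Lemma inv_improve_prob_coarse (i r : nat) :
  (0 < r)%N -> (2 * r <= n)%N -> (i <= n)%N -> (improve_prob i r)^-1 <= n%:R * 2 ^+ n.
Proof.
move=> r_gt0 r2_le_n le_in; have n_gt0 : 0 < n%:R :> R by rewrite ltr0n; lia.
have a_half : r%:R / n%:R <= 1 / 2 :> R.
  have r2 : 2 * r%:R <= n%:R :> R by rewrite -natrM ler_nat.
  by rewrite ler_pdivrMr //; lra.
have lb : n%:R^-1 * (2 ^+ n)^-1 <= improve_prob i r.
  apply: ler_pM; rewrite ?invr_ge0 ?exprn_ge0 //.
    by rewrite ler_pdivlMr // mulVf ?gt_eqF // ler1n.
  apply: (@le_trans _ _ ((1 - r%:R / n%:R) ^+ n)); last first.
    by apply: ler_wiXn2l => //; lra.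
  by rewrite -exprVn lerXn2r ?nnegrE ?invr_ge0 //; lra.
have lb_gt0 : 0 < n%:R^-1 * (2 ^+ n)^-1 :> R by rewrite mulr_gt0 ?invr_gt0 ?exprn_gt0.
apply: (@le_trans _ _ (n%:R^-1 * (2 ^+ n)^-1)^-1).
  by rewrite lef_pV2 ?posrE // (lt_le_trans lb_gt0 lb).
by rewrite invfM !invrK mulrC.
Qed.

Lemma natr_ones_upto (y : bits n) (k : nat) :
  ((ones_upto y k : nat)%:R : R) =
  \prod_(j < n) (if (j <= k)%N then ((y j : nat)%:R : R) else 1).
Proof. by rewrite -prod_bits_ones_upto natr_prod big_mkcond. Qed.

(* An offspring of a non-optimal [x] improves on it with probability
   [improve_prob (LeadingOnes x) r]: the joint weight factorises over the
   bits, the first [LeadingOnes x] bits must not flip, the next one must flip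
   and the remaining ones are free. *)
Lemma improvement_prob (r : nat) (x : bits n) : (LeadingOnes x < n)%N ->
  \sum_(y : bits n) mutprob R r x y * ((LeadingOnes x < LeadingOnes y)%N : nat)%:R
  = improve_prob (LeadingOnes x) r.
Proof.
set k := LeadingOnes x => lt_kn; set a : R := r%:R / n%:R.
pose G (i : 'I_n) (b : bool) : R :=
  (if x i != b then a else 1 - a) * (if (i <= k)%N then (b : nat)%:R else 1).
pose h (i : nat) : R := if (i < k)%N then 1 - a else if i == k then a else 1.
transitivity (\sum_(y : bits n) \prod_(i < n) G i (y i)).
  apply: eq_bigr => y _.
  by rewrite LeadingOnes_gt lt_kn natr_ones_upto /mutprob -big_split.
rewrite sum_prod_bits; transitivity (\prod_(i < n) h i).
  apply: eq_bigr => i _; rewrite /G /h.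
  case: (ltngtP i k) => [lt_ik | lt_ki | ik].
  - by rewrite LeadingOnes_prefix //= mulr1 mulr0 addr0.
  - by rewrite !mulr1; case: (x i) => /=; rewrite ?subrK // addrC subrK.
  - by rewrite LeadingOnes_first_zero //= mulr1 mulr0 addr0.
rewrite -(big_mkord xpredT) (big_cat_nat (n := k.+1)) //= big_nat_recr //=.
rewrite [X in _ * X]big1_seq ?mulr1; last first.
  move=> i /andP [_]; rewrite mem_index_iota => /andP [lt_ki _].
  by rewrite /h ltnNge ltnW //= gtn_eqF.
rewrite /h ltnn eqxx (eq_big_nat _ _ (F2 := fun=> 1 - a)); last first.
  by move=> i /andP [_ ->].
by rewrite prodr_const_nat subn0 mulrC.
Qed.

End Mutation.

(* A potential that decreases by at least one in expectation per iteration
   bounds the expected number of iterations, i.e. the sum of the survival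
   probabilities (additive drift). *)
Section SurvivalDrift.
Variable R : realType.
Variables (n : nat) (Rp : R).
Variable valid : pred (state n).
Variable pot : state n -> R.
Hypothesis valid_step :
  forall s y, valid s -> y != ones n -> valid (sd_step Rp s y).
Hypothesis valid_strength : forall s, valid s -> (s.1.2 <= n)%N.
Hypothesis pot_ge0 : forall s, valid s -> 0 <= pot s.
Hypothesis pot_drift : forall s, valid s ->
  1 + \sum_(y : bits n) mutprob R s.1.2 s.1.1 y *
        (if y == ones n then 0 else pot (sd_step Rp s y)) <= pot s.

Lemma survive_ge0 (t : nat) (s : state n) : valid s -> 0 <= survive Rp t s.
Proof.
elim: t s => [|t IH] s s_valid //=.
apply: sumr_ge0 => y _; rewrite mulr_ge0 ?mutprob_ge0 ?valid_strength //.
by case: eqP => // /eqP y_not1; apply/IH/valid_step.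
Qed.

Lemma survive_sum_le (T : nat) (s : state n) :
  valid s -> \sum_(t < T) survive Rp t s <= pot s.
Proof.
elim: T s => [|T IH] s s_valid; first by rewrite big_ord0 pot_ge0.
rewrite big_ord_recl /=; apply: le_trans (pot_drift s_valid); rewrite lerD2l.
rewrite exchange_big /=; apply: ler_sum => y _; rewrite -mulr_sumr.
rewrite ler_wpM2l ?mutprob_ge0 ?valid_strength //.
case: eqP => [_ | /eqP y_not1]; first by rewrite big1.
exact/IH/valid_step.
Qed.

End SurvivalDrift.

Section Potential.
Variable R : realType.
Variable n : nat.
Variable Rp : R.

Local Notation p := (improve_prob R n).

Definition max_strength : nat := n./2.

(* Starting from counter value [u], the number of further unsuccessful
   iterations (this one included) after which the strength [r] is increased. *)
Definition wait (r u : nat) : nat :=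
  maxn ((Num.truncn (threshold n Rp r)).+1 - u) 1.

(* [phase_time i r] bounds the expected time spent on fitness level [i] when
   the level is worked on with strength [r] and a fresh counter: a phase of
   [wait r 0] trials at strength [r], each improving with probability
   [p i r], followed (if all fail) by the same with strength [r + 1];
   strength [max_strength] is kept forever. *)
Fixpoint phase_time_rec (i f r : nat) : R :=
  if f is f'.+1 then (p i r)^-1 + (1 - p i r) ^+ wait r 0 * phase_time_rec i f' r.+1
  else (p i r)^-1.

Definition phase_time (i r : nat) : R := phase_time_rec i (max_strength - r) r.

Definition next_phase_time (i r : nat) : R :=
  if (r < max_strength)%N then phase_time i r.+1 else 0.

Definition stage_time (i r u : nat) : R :=
  (p i r)^-1 + (1 - p i r) ^+ wait r u * next_phase_time i r.

Definition remaining_time (j : nat) : R := \sum_(j <= k < n) phase_time k 1.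

Definition potential (s : state n) : R :=
  remaining_time (LeadingOnes s.1.1).+1 + stage_time (LeadingOnes s.1.1) s.1.2 s.2.

Lemma stage_time0 (i r : nat) : stage_time i r 0 = phase_time i r.
Proof.
rewrite /stage_time /next_phase_time /phase_time.
case: ltnP => [lt_rm | le_mr]; first by rewrite -[(max_strength - r)%N]subnSK.
by rewrite (eqnP le_mr) mulr0 addr0.
Qed.

Lemma phase_time_unfold (i r : nat) : (r < max_strength)%N ->
  phase_time i r = (p i r)^-1 + (1 - p i r) ^+ wait r 0 * phase_time i r.+1.
Proof. by move=> lt_rm; rewrite -stage_time0 /stage_time /next_phase_time lt_rm. Qed.

Lemma phase_time_max (i : nat) : phase_time i max_strength = (p i max_strength)^-1.
Proof. by rewrite /phase_time subnn. Qed.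

Lemma remaining_time_rec (j : nat) : (j < n)%N ->
  remaining_time j = phase_time j 1 + remaining_time j.+1.
Proof. by move=> lt_jn; rewrite /remaining_time big_ltn. Qed.

Lemma potential_start (x : bits n) : x != ones n ->
  potential (x, 1%N, 0%N) = remaining_time (LeadingOnes x).
Proof.
move=> x_not1; rewrite /potential /= stage_time0 addrC.
by rewrite -remaining_time_rec ?LeadingOnes_lt.
Qed.

Hypothesis n_ge2 : (2 <= n)%N.

Lemma max_strength_gt0 : (0 < max_strength)%N.
Proof. rewrite /max_strength; lia. Qed.

Lemma max_strength_lt : (max_strength < n)%N.
Proof. rewrite /max_strength; lia. Qed.

Lemma improve_prob_range (i r : nat) :
  (0 < r)%N -> (r <= max_strength)%N -> 0 < p i r <= 1.
Proof.
have := max_strength_lt => lt_mn r_gt0 le_rm.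
by rewrite improve_prob_gt0 ?improve_prob_le1 //; lia.
Qed.

Hypothesis Rp_ge1 : 1 <= Rp.

Lemma threshold_ge0 (r : nat) : 0 <= threshold n Rp r.
Proof.
have n_ge1 : 1 <= n%:R :> R by rewrite ler1n; lia.
rewrite /threshold !mulr_ge0 ?exprn_ge0 ?divr_ge0 ?mulr_ge0 ?expR_ge0 //.
by rewrite ln_ge0 // mulr_ege1.
Qed.

Lemma wait_last (r u : nat) : threshold n Rp r < u.+1%:R -> wait r u = 1%N.
Proof. by rewrite -truncn_lt_nat ?threshold_ge0 // /wait => ?; lia. Qed.

Lemma wait_next (r u : nat) :
  ~~ (threshold n Rp r < u.+1%:R) -> wait r u = (wait r u.+1).+1.
Proof. by rewrite -truncn_lt_nat ?threshold_ge0 // /wait => ?; lia. Qed.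

Lemma phase_time_rec_ge0 (i f r : nat) :
  (0 < r)%N -> (r + f <= max_strength)%N -> 0 <= phase_time_rec i f r.
Proof.
elim: f r => [|f IH] r r_gt0 le_rfm /=;
  have /andP [p_gt0 p_le1] :=
    improve_prob_range i r_gt0 (leq_trans (leq_addr _ _) le_rfm).
  by rewrite invr_ge0 ltW.
apply: addr_ge0; first by rewrite invr_ge0 ltW.
by rewrite mulr_ge0 ?exprn_ge0 ?subr_ge0 // IH // addSnnS.
Qed.

Lemma phase_time_ge0 (i r : nat) :
  (0 < r)%N -> (r <= max_strength)%N -> 0 <= phase_time i r.
Proof. by move=> r_gt0 le_rm; rewrite phase_time_rec_ge0 ?subnKC. Qed.

Lemma next_phase_time_ge0 (i r : nat) : 0 <= next_phase_time i r.
Proof. by rewrite /next_phase_time; case: ifP => // lt_rm; rewrite phase_time_ge0. Qed.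

Lemma stage_time_ge0 (i r u : nat) :
  (0 < r)%N -> (r <= max_strength)%N -> 0 <= stage_time i r u.
Proof.
move=> r_gt0 le_rm; have /andP [p_gt0 p_le1] := improve_prob_range i r_gt0 le_rm.
apply: addr_ge0; first by rewrite invr_ge0 ltW.
by rewrite mulr_ge0 ?exprn_ge0 ?subr_ge0 ?next_phase_time_ge0.
Qed.

(* The stage bound decreases by one per trial in expectation: the trial
   fails with probability [1 - p i r], after which the counter grows, or the
   strength grows and the counter restarts when the threshold is exceeded. *)
Lemma stage_time_step (i r u : nat) : (0 < r)%N -> (r <= max_strength)%N ->
  1 + (1 - p i r) *
      (if threshold n Rp r < u.+1%:R then stage_time i (minn r.+1 max_strength) 0
       else stage_time i r u.+1)
  <= stage_time i r u.
Proof.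
move=> r_gt0 le_rm; have /andP [p_gt0 p_le1] := improve_prob_range i r_gt0 le_rm.
have pV : p i r * (p i r)^-1 = 1 by rewrite mulfV // gt_eqF.
case: ifP => [over | /negbT under]; last first.
  rewrite /stage_time (wait_next under) exprS.
  move: (p i r) (wait r u.+1) (next_phase_time i r) p_gt0 pV => P k N.
  lra.
rewrite stage_time0 [in X in _ <= X]/stage_time (wait_last over) expr1.
have [lt_rm | le_mr] := ltnP r max_strength.
  rewrite /next_phase_time lt_rm (minn_idPl lt_rm).
  have : 1 <= (p i r)^-1 by rewrite invf_ge1.
  move: (p i r) (phase_time i r.+1) => P V; lra.
have r_max : r = max_strength by apply/eqP; rewrite eqn_leq le_rm.
rewrite /next_phase_time -r_max ltnn (minn_idPr (leqnSn r)) r_max phase_time_max.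
rewrite -r_max; move: (p i r) p_gt0 pV => P; lra.
Qed.

Lemma remaining_time_ge0 (j : nat) : 0 <= remaining_time j.
Proof. by apply: sumr_ge0 => k _; rewrite phase_time_ge0 ?max_strength_gt0. Qed.

Lemma remaining_time_mono (j k : nat) :
  (j <= k)%N -> (k <= n)%N -> remaining_time k <= remaining_time j.
Proof.
move=> le_jk le_kn; rewrite /remaining_time (@big_cat_nat _ _ _ k j n _ _ le_jk le_kn) /= lerDr.
by apply: sumr_ge0 => l _; rewrite phase_time_ge0 ?max_strength_gt0.
Qed.

(* The states reachable before the optimum is found: the current search
   point is not optimal and the strength lies in [1, max_strength]. *)
Definition valid_state (s : state n) : bool :=
  [&& s.1.1 != ones n, (0 < s.1.2)%N & (s.1.2 <= max_strength)%N].

Lemma valid_step (s : state n) (y : bits n) :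
  valid_state s -> y != ones n -> valid_state (sd_step Rp s y).
Proof.
case: s => [[x r] u] /and3P [/= x_not1 r_gt0 le_rm] y_not1.
have m_gt0 := max_strength_gt0; rewrite /sd_step.
case: ifP => _; first by rewrite /valid_state /= y_not1.
have x'_not1 : (if (LeadingOnes y == LeadingOnes x) && (r == 1%N) then y else x) != ones n.
  by case: ifP.
by case: ifP => _; rewrite /valid_state /= x'_not1 /= ?r_gt0 ?le_rm //= -/max_strength; lia.
Qed.

(* Valid states use strengths at most [n], so mutation is well defined. *)
Lemma valid_strength (s : state n) : valid_state s -> (s.1.2 <= n)%N.
Proof. by case/and3P => _ _ le_rm; exact: leq_trans le_rm (ltnW max_strength_lt). Qed.

Lemma potential_ge0 (s : state n) : valid_state s -> 0 <= potential s.
Proof.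
by case/and3P => _ r_gt0 le_rm; rewrite addr_ge0 ?remaining_time_ge0 ?stage_time_ge0.
Qed.

Lemma potential_after (x y : bits n) (r u : nat) : x != ones n ->
  (if y == ones n then 0 else potential (sd_step Rp (x, r, u) y)) <=
  remaining_time (LeadingOnes x).+1 +
  (1 - ((LeadingOnes x < LeadingOnes y)%N : nat)%:R) *
  (if threshold n Rp r < u.+1%:R
   then stage_time (LeadingOnes x) (minn r.+1 max_strength) 0
   else stage_time (LeadingOnes x) r u.+1).
Proof.
move=> x_not1; set i := LeadingOnes x; have lt_in := LeadingOnes_lt x_not1.
have [not_improved | improved] := leqP (LeadingOnes y) i; rewrite /=.
  have y_not1 : y != ones n.
    by apply: contraTneq not_improved => ->; rewrite LeadingOnes_ones -ltnNge.
  rewrite mulr0n subr0 mul1r (negbTE y_not1) /sd_step /= -/i ltnNge not_improved /=.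
  set x' := if _ then y else x.
  have LO_x' : LeadingOnes x' = i by rewrite /x'; case: ifP => // /andP [/eqP -> _].
  by case: ifP => _; rewrite /potential /= LO_x'.
rewrite mulr1n subrr mul0r addr0; case: eqP => [_ | /eqP y_not1].
  exact: remaining_time_ge0.
rewrite /sd_step /= -/i improved potential_start //.
by rewrite remaining_time_mono ?LeadingOnes_le.
Qed.

Lemma potential_drift (s : state n) : valid_state s ->
  1 + \sum_(y : bits n) mutprob R s.1.2 s.1.1 y *
        (if y == ones n then 0 else potential (sd_step Rp s y)) <= potential s.
Proof.
case: s => [[x r] u] /and3P [/= x_not1 r_gt0 le_rm].
have le_rn : (r <= n)%N := leq_trans le_rm (ltnW max_strength_lt).
set i := LeadingOnes x; pose q (y : bits n) : R := ((i < LeadingOnes y)%N : nat)%:R.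
pose W' := if threshold n Rp r < u.+1%:R
           then stage_time i (minn r.+1 max_strength) 0 else stage_time i r u.+1.
apply: (@le_trans _ _ (1 + (remaining_time i.+1 + (1 - p i r) * W'))); last first.
  by rewrite /potential /= -/i addrCA lerD2l stage_time_step.
rewrite lerD2l; apply: (@le_trans _ _
  (\sum_(y : bits n) mutprob R r x y * (remaining_time i.+1 + (1 - q y) * W'))).
  by apply: ler_sum => y _; apply: ler_wpM2l; [exact: mutprob_ge0 | exact: potential_after].
rewrite (eq_bigr (fun y => mutprob R r x y * remaining_time i.+1 +
  (mutprob R r x y - mutprob R r x y * q y) * W')); last by move=> y _; ring.
rewrite big_split /= -!mulr_suml sumrB !mutprob_sum1 mul1r.
by rewrite improvement_prob ?LeadingOnes_lt.
Qed.

End Potential.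

Section ExpEstimates.
Variable R : realType.

Lemma expR_le_1_sub (a : R) :
  0 <= a -> a <= 1 / 2 -> expR (- (a + 2 * a ^+ 2)) <= 1 - a.
Proof.
move=> a_ge0 a_le_half; set y := a + 2 * a ^+ 2.
have y_le := expR_ge1Dx y; have e_gt0 := expR_gt0 y.
rewrite expRN -[(expR _)^-1]mul1r ler_pdivrMr //.
have : 1 <= (1 - a) * (1 + y) by rewrite /y; nra.
by move/le_trans; apply; apply: ler_wpM2l => //; lra.
Qed.

Lemma expR_half_le2 : expR (1 / 2 : R) <= 2.
Proof.
have := expR_ge1Dx (- (1 / 2) : R); rewrite expRN.
have e_gt0 := expR_gt0 (1 / 2 : R).
by rewrite -[(expR _)^-1]mul1r ler_pdivlMr //; lra.
Qed.

Lemma expR_half_nat_le (r : nat) : expR (r%:R / 2 : R) <= 2 ^+ r.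
Proof.
have -> : r%:R / 2 = r%:R * (1 / 2) :> R by rewrite mul1r.
rewrite expRM_natl.
by rewrite lerXn2r ?nnegrE ?expR_ge0 ?expR_half_le2.
Qed.

End ExpEstimates.

Section SmallStrength.
Variable R : realType.
Variables n r : nat.
Hypothesis r_gt0 : (0 < r)%N.
Hypothesis r4_le_n : (4 * r <= n)%N.

Local Notation nn := (n%:R : R).
Local Notation rr := (r%:R : R).
Local Notation a := (r%:R / n%:R : R).
Local Notation p := (improve_prob R n).

Let nn_gt0 : 0 < nn.
Proof. rewrite ltr0n; lia. Qed.

Let rr_ge1 : 1 <= rr.
Proof. by rewrite ler1n. Qed.

Lemma small_rate : 0 < a <= 1 / 4.
Proof.
have n_gt0 := nn_gt0; have r4 : 4 * rr <= nn by rewrite -natrM ler_nat.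
rewrite divr_gt0 ?ltr0n //=; last lia.
by rewrite ler_pdivrMr //; lra.
Qed.

Lemma pow_1_sub_rate_lb (i : nat) :
  (i <= n)%N -> expR (- (rr + rr / 2)) <= (1 - a) ^+ i.
Proof.
move=> le_in; have /andP [a_gt0 a_le] := small_rate.
have n_gt0 := nn_gt0; have r_ge1 := rr_ge1.
apply: (@le_trans _ _ ((1 - a) ^+ n)); last by apply: ler_wiXn2l => //; lra.
apply: (@le_trans _ _ (expR (- (a + 2 * a ^+ 2)) ^+ n)); last first.
  by rewrite lerXn2r ?nnegrE ?expR_ge0 ?expR_le_1_sub //; lra.
rewrite -expRM_natr ler_expR.
have an : a * nn = rr by rewrite mulfVK // gt_eqF.
move: a an a_gt0 a_le => A an A_gt0 A_le.
rewrite mulNr; have -> : (A + 2 * A ^+ 2) * nn = rr + 2 * A * rr by rewrite -an; ring.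
have : 2 * A * rr <= rr / 2 by nra.
lra.
Qed.

Lemma improve_prob_lb (i : nat) :
  (i <= n)%N -> a * expR (- (rr + rr / 2)) <= p i r.
Proof.
move=> le_in; have /andP [a_gt0 _] := small_rate.
by apply: ler_wpM2l; [exact: ltW | exact: pow_1_sub_rate_lb].
Qed.

Lemma inv_improve_prob_small (i : nat) :
  (i <= n)%N -> (p i r)^-1 <= nn * 16 ^+ r.
Proof.
move=> le_in; have /andP [a_gt0 _] := small_rate.
have n_gt0 := nn_gt0; have r_ge1 := rr_ge1.
have lb_gt0 : 0 < a * expR (- (rr + rr / 2)) by rewrite mulr_gt0 ?expR_gt0.
apply: (@le_trans _ _ (a * expR (- (rr + rr / 2)))^-1).
  by rewrite lef_pV2 ?posrE ?improve_prob_lb // (lt_le_trans lb_gt0) ?improve_prob_lb.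
have r_gt0' : 0 < rr by apply: lt_le_trans ltr01 r_ge1.
rewrite invfM expRN invrK invf_div; apply: ler_pM.
- by rewrite divr_ge0 // ltW.
- exact: expR_ge0.
- by rewrite ler_pdivrMr //; nra.
have -> : (16 : R) = 2 ^+ 4 by rewrite -natrX.
rewrite exprAC; apply: le_trans (_ : expR (4%:R * (rr / 2)) <= _).
  by rewrite ler_expR; lra.
by rewrite expRM_natl lerXn2r ?nnegrE ?expR_ge0 ?exprn_ge0 ?expR_half_nat_le.
Qed.

(* With stagnation threshold [2 (e n/r)^r ln(nR)], a phase at strength [r]
   lasts at least [ln (n R) / p i r] trials. *)
Lemma improve_prob_threshold (i : nat) :
  (i <= n)%N -> 1 <= p i r * (2 * (expR 1 * nn / rr) ^+ r).
Proof.
move=> le_in; have n_gt0 := nn_gt0; have r_ge1 := rr_ge1.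
have r_gt0' : 0 < rr by apply: lt_le_trans ltr01 r_ge1.
have E_gt0 := expR_gt0 (rr / 2).
set b := nn / rr.
have b_ge2 : 2 <= b.
  have r4 : 4 * rr <= nn by rewrite -natrM ler_nat.
  by rewrite ler_pdivlMr //; lra.
have coefE : 2 * (expR 1 * nn / rr) ^+ r = 2 * expR rr * b ^+ r.
  by rewrite -mulrA exprMn -expRM_natl mulr1 mulrA.
have lbE : a * expR (- (rr + rr / 2)) * (2 * expR rr * b ^+ r)
         = 2 * b ^+ r.-1 / expR (rr / 2).
  rewrite opprD expRD !expRN -[in b ^+ r](prednK r_gt0) exprS /b.
  by field; rewrite !gt_eqF ?expR_gt0.
have pow2 : 2 ^+ r <= 2 * b ^+ r.-1.
  by rewrite -[in 2 ^+ r](prednK r_gt0) exprS ler_wpM2l // lerXn2r ?nnegrE //; lra.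
apply: (@le_trans _ _ (a * expR (- (rr + rr / 2)) * (2 * expR rr * b ^+ r))).
  rewrite lbE ler_pdivlMr // mul1r.
  exact: le_trans (expR_half_nat_le _ r) pow2.
rewrite coefE; apply: ler_wpM2r; last exact: improve_prob_lb.
by rewrite !mulr_ge0 ?expR_ge0 ?exprn_ge0 //; lra.
Qed.

Variable Rp : R.
Hypothesis Rp_ge_n : nn <= Rp.

(* Since [(1 - p)^k <= e^(-p k)] and [p] times the threshold is at least
   [ln (n R) >= ln (n^2)], a whole phase at strength [r] fails with
   probability at most [1/n^2]. *)
Lemma phase_failure_le (i : nat) :
  (i <= n)%N -> (1 - p i r) ^+ wait n Rp r 0 <= (nn ^+ 2)^-1.
Proof.
move=> le_in; have n_gt0 := nn_gt0.
have n_ge1 : 1 <= nn by rewrite ler1n; lia.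
have /andP [p_gt0 p_le1] : 0 < p i r <= 1.
  by rewrite improve_prob_gt0 ?improve_prob_le1 //; lia.
set T := threshold n Rp r.
have waitE : wait n Rp r 0 = (Num.truncn T).+1 by rewrite /wait subn0; apply/maxn_idPl.
have T_lt : T < (Num.truncn T).+1%:R := truncnS_gt T.
have nR_gt0 : 0 < nn * Rp by rewrite mulr_gt0 // (lt_le_trans n_gt0).
have ln_le : ln (nn * Rp) <= p i r * T.
  rewrite /T /threshold mulrA -[X in X <= _]mul1r; apply: ler_wpM2r.
    by rewrite ln_ge0 // mulr_ege1 // (le_trans n_ge1).
  exact: improve_prob_threshold.
apply: (@le_trans _ _ (expR (- p i r) ^+ wait n Rp r 0)).
  rewrite lerXn2r ?nnegrE ?expR_ge0 ?subr_ge0 //.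
  exact: expR_ge1Dx.
rewrite -expRM_natr waitE; apply: (@le_trans _ _ (expR (- ln (nn * Rp)))).
  by rewrite ler_expR mulNr lerN2 (le_trans ln_le) // ler_wpM2l // ltW.
rewrite expRN lnK ?posrE // lef_pV2 ?posrE ?exprn_gt0 // expr2 ler_pM2l //.
Qed.

End SmallStrength.

Section Recurrences.
Variable R : realDomainType.

Lemma unroll_additive (v : nat -> R) (c : R) (l m : nat) :
  (forall r, (l <= r < m)%N -> v r <= c + v r.+1) -> v m <= c ->
  forall r, (l <= r <= m)%N -> v r <= (m - r).+1%:R * c.
Proof.
move=> step base; suff bound : forall d r,
    (m - r)%N = d -> (l <= r <= m)%N -> v r <= d.+1%:R * c.
  by move=> r; exact: bound.
elim=> [|d IH] r dE /andP [le_lr le_rm].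
  have -> : r = m by lia.
  by rewrite mulr1n mul1r.
apply: le_trans (step r _) _; first by lia.
by rewrite mulrSr mulrDl mul1r addrC lerD2r; apply: IH; lia.
Qed.

(* Unrolling [v r <= A b^r + y v (r + 1)] downwards from [v m <= B], when
   [2 b y <= 1]: the terms [A b^r] form a dominated geometric series. *)
Lemma unroll_geometric (v : nat -> R) (A B b y : R) (l m : nat) :
  0 <= A -> 0 <= b -> 0 <= y -> 2 * b * y <= 1 ->
  (forall r, (l <= r < m)%N -> v r <= A * b ^+ r + y * v r.+1) -> v m <= B ->
  forall r, (l <= r <= m)%N -> v r <= 2 * A * b ^+ r + B * y ^+ (m - r).
Proof.
move=> A_ge0 b_ge0 y_ge0 by_le step base; suff bound : forall d r,
    (m - r)%N = d -> (l <= r <= m)%N -> v r <= 2 * A * b ^+ r + B * y ^+ d.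
  by move=> r; exact: bound.
elim=> [|d IH] r dE /andP [le_lr le_rm].
all: have Ab_ge0 : 0 <= A * b ^+ r by rewrite mulr_ge0 ?exprn_ge0.
  have r_m : r = m by lia.
  move: Ab_ge0; rewrite expr0 mulr1 r_m => Ab_ge0.
  by apply: le_trans base _; lra.
have next : v r.+1 <= 2 * A * b ^+ r.+1 + B * y ^+ d by apply: IH; lia.
have shrink : 2 * b * y * (A * b ^+ r) <= A * b ^+ r by rewrite ler_piMl.
apply: le_trans (step r _) _; first by lia.
apply: (@le_trans _ _ (A * b ^+ r + y * (2 * A * b ^+ r.+1 + B * y ^+ d))).
  by rewrite lerD2l ler_wpM2l.
rewrite !exprS; lra.
Qed.

End Recurrences.

Lemma nat_exp_bound (n : nat) :
  (64 <= n)%N -> (n ^ 2 * 2 ^ n <= (n ^ 2) ^ (n %/ 4 - 1))%N.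
Proof.
move=> n_ge64; set r0 := (n %/ 4)%N.
have r0_ge16 : (16 <= r0)%N by rewrite /r0; lia.
have n_le : (n <= 4 * r0 + 3)%N by rewrite /r0; lia.
rewrite -expnM (_ : (2 * (r0 - 1) = 2 + (2 * r0 - 4))%N); last by lia.
rewrite expnD leq_mul2l; apply/orP; right.
apply: (@leq_trans (2 ^ (6 * (2 * r0 - 4)))); first by rewrite leq_pexp2l //; lia.
by rewrite expnM leq_exp2r //; lia.
Qed.

Section RuntimeBound.
Variable R : realType.
Variables (n : nat) (Rp : R).
Hypothesis n_ge64 : (64 <= n)%N.
Hypothesis Rp_ge_n : n%:R <= Rp.

Local Notation nn := (n%:R : R).
Local Notation p := (improve_prob R n).
Local Notation V := (phase_time n Rp).
Local Notation m := (max_strength n).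

Let n_ge2 : (2 <= n)%N. Proof. exact: leq_trans n_ge64. Qed.
Let Rp_ge1 : 1 <= Rp. Proof. by apply: le_trans Rp_ge_n; rewrite ler1n; lia. Qed.

Lemma phase_time_le (i r : nat) (c y : R) : (0 < r)%N -> (r < m)%N ->
  (p i r)^-1 <= c -> (1 - p i r) ^+ wait n Rp r 0 <= y -> V i r <= c + y * V i r.+1.
Proof.
move=> r_gt0 lt_rm p_c q_y; rewrite phase_time_unfold //.
have /andP [p_gt0 p_le1] := improve_prob_range R n_ge2 i r_gt0 (ltnW lt_rm).
have V_ge0 : 0 <= V i r.+1 := phase_time_ge0 Rp n_ge2 i (ltn0Sn r) lt_rm.
by apply: lerD => //; apply: ler_wpM2r; rewrite // exprn_ge0 // subr_ge0.
Qed.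

Lemma phase_time_coarse (i r : nat) : (i <= n)%N -> (0 < r)%N -> (r <= m)%N ->
  V i r <= (m - r).+1%:R * (nn * 2 ^+ n).
Proof.
move=> le_in r_gt0 le_rm.
have m2_le_n : (2 * m <= n)%N by rewrite /max_strength; lia.
apply: (unroll_additive (l := 1%N)); last by rewrite r_gt0 le_rm.
  move=> k /andP [k_gt0 lt_km]; rewrite -[V i k.+1]mul1r.
  have /andP [p_gt0 p_le1] := improve_prob_range R n_ge2 i k_gt0 (ltnW lt_km).
  apply: phase_time_le => //; last by rewrite exprn_ile1 // ?subr_ge0 // lerBlDr lerDl ltW.
  by apply: inv_improve_prob_coarse => //; lia.
rewrite phase_time_max.
by apply: inv_improve_prob_coarse; rewrite ?max_strength_gt0 //; lia.
Qed.

(* Up to strength [n/4] each phase costs [O(n 16^r)] and fails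
   with probability at most [1/n^2]; reaching strength [n/4] has probability
   at most [(1/n^2)^(n/4 - 1)], which absorbs the coarse bound there. *)
Lemma phase_time_one (i : nat) : (i <= n)%N -> V i 1 <= 33 * nn.
Proof.
move=> le_in; set r0 := (n %/ 4)%N; set y : R := (nn ^+ 2)^-1.
set B : R := nn * (nn * 2 ^+ n).
have n_ge1 : 1 <= nn by rewrite ler1n; lia.
have r0_ge2 : (2 <= r0)%N by rewrite /r0; lia.
have r0_le_m : (r0 <= m)%N by rewrite /r0 /max_strength; lia.
have y_ge0 : 0 <= y by rewrite invr_ge0 exprn_ge0 // ler0n.
have y_small : 2 * 16 * y <= 1.
  have n_ge64' : 64 <= nn by rewrite (ler_nat R 64 n).
  rewrite ler_pdivrMr ?exprn_gt0 ?(lt_le_trans ltr01) // mul1r; nra.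
have step : forall k, (1 <= k < r0)%N -> V i k <= nn * 16 ^+ k + y * V i k.+1.
  move=> k /andP [k_gt0 lt_kr0]; have k4 : (4 * k <= n)%N by rewrite /r0 in lt_kr0; lia.
  apply: phase_time_le; rewrite ?(leq_trans lt_kr0) //.
    exact: inv_improve_prob_small.
  exact: phase_failure_le.
have base : V i r0 <= B.
  apply: le_trans (phase_time_coarse le_in _ r0_le_m) _; first by lia.
  apply: ler_wpM2r; first by rewrite mulr_ge0 ?exprn_ge0.
  by rewrite ler_nat /max_strength; lia.
have := unroll_geometric (ler0n _ n) (ler0n _ 16) y_ge0 y_small step base.
move=> /(_ 1%N (ltnW r0_ge2)); rewrite expr1 => V1_le; apply: le_trans V1_le _.
suff : B * y ^+ (r0 - 1) <= 1 by lra.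
have := nat_exp_bound n_ge64; rewrite -(ler_nat R) natrM !natrX -/r0 => big.
rewrite /y exprVn ler_pdivrMr ?exprn_gt0 ?(lt_le_trans ltr01) // mul1r.
by apply: le_trans big; rewrite /B mulrA expr2.
Qed.

Lemma remaining_time_le : remaining_time n Rp 0 <= 33 * nn ^+ 2.
Proof.
apply: (@le_trans _ _ (\sum_(0 <= k < n) 33 * nn)).
  by apply: ler_sum_nat => k /andP [_ lt_kn]; rewrite phase_time_one // ltnW.
by rewrite sumr_const_nat subn0 -[_ *+ n]mulr_natr expr2 mulrA.
Qed.

Lemma valid_start (x : bits n) : x != ones n -> valid_state (x, 1%N, 0%N).
Proof. by move=> x_not1; rewrite /valid_state /= x_not1 max_strength_gt0. Qed.

Lemma tail_prob_ge0 (t : nat) : 0 <= tail_prob n Rp t.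
Proof.
rewrite mulr_ge0 ?invr_ge0 ?exprn_ge0 //; apply: sumr_ge0 => x _.
case: eqP => // /eqP x_not1.
exact: survive_ge0 (valid_step n_ge2 Rp_ge1) (valid_strength n_ge2) _ _ (valid_start x_not1).
Qed.

(* By the drift lemma, the partial sums of [P(T > t)] are bounded by the
   average over the initial points of their potential, which is at most
   [remaining_time 0]. *)
Lemma tail_prob_sum_le (T : nat) : \sum_(0 <= t < T) tail_prob n Rp t <= 33 * nn ^+ 2.
Proof.
apply: le_trans remaining_time_le; rewrite -mulr_sumr exchange_big /=.
apply: (@le_trans _ _ ((2 ^+ n)^-1 * \sum_(x : bits n) remaining_time n Rp 0)); last first.
  rewrite sumr_const card_ffun card_bool card_ord -[_ *+ 2 ^ n]mulr_natr natrX mulrCA.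
  by rewrite mulVf ?mulr1 // expf_neq0.
rewrite ler_wpM2l ?invr_ge0 ?exprn_ge0 //; apply: ler_sum => x _.
case: eqP => [_ | /eqP x_not1]; first by rewrite big1 ?remaining_time_ge0.
rewrite big_mkord; apply: le_trans (survive_sum_le (valid_step n_ge2 Rp_ge1)
  (valid_strength n_ge2) (potential_ge0 Rp n_ge2)
  (potential_drift n_ge2 Rp_ge1) T (valid_start x_not1)) _.
by rewrite potential_start // remaining_time_mono ?LeadingOnes_le.
Qed.

Lemma expected_runtime_le : (expected_runtime n Rp <= (33 * nn ^+ 2)%:E)%E.
Proof.
apply: lime_le; first by apply: is_cvg_nneseries => t _ _; rewrite lee_fin tail_prob_ge0.
by apply: nearW => T; rewrite sumEFin lee_fin tail_prob_sum_le.
Qed.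

End RuntimeBound.

Theorem mainTheorem6 (R : realType) (c : nat) :
  exists (C : R) (n0 : nat), 0 < C /\
    forall (n : nat) (Rp : R),
      (n0 <= n)%N -> ~~ odd n ->
      (n.+1)%:R <= Rp -> Rp <= (n%:R) ^+ c ->
      (expected_runtime n Rp <= (C * (n%:R) ^+ 2)%:E)%E.
Proof.
exists 33, 64%N; split => // n Rp n_ge64 _ Rp_ge _.
by apply: expected_runtime_le => //; apply: le_trans Rp_ge; rewrite ler_nat.
Qed.
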